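(* For $d\geq 0$ and $n\geq 1$ let $\psi_d(n)=n^d$. For $n\geq 3$ define \[ D^{\psi}(n):=\begin{cases} 2n\log_{9/8}(2), & n\equiv 0\pmod 3,\\ 2n\log_{9/8}(2)+\log_{9/8}(3)-\log_{9/8}(n+2), & n\equiv 1\pmod 3,\\ (n+2)\log_{9/8}(2), & n\equiv 2\pmod 3,\ n\neq 5,\\ \log_{9/8}(512), & n=5. \end{cases} \] Let $n\geq 3$ and let $d$ be an integer with $d>D^{\psi}(n)$. Then \[ \frac{\bigl(q^{\psi_d}(n)\bigr)^2}{q^{\psi_d}(n-1)\,q^{\psi_d}(n+1)}<1 \quad\text{if and only if}\quad n\equiv 1\pmod 3 . \]
   Context: For a double sequence $\{g_d(n)\}_{d\geq 0,n\geq 1}$ of positive reals, the numbers $q^{g_d}(n)$ ($n\geq 0$) are defined as the coefficients of the power series \[ \sum_{n=0}^{\infty} q^{g_d}(n)\,t^n := \frac{1}{1-\sum_{n=1}^{\infty} g_d(n)\,t^n}. \] Here $g_d=\psi_d$, i.e. $\sum_n q^{\psi_d}(n)t^n = 1/(1-\sum_{n\ge1} n^d t^n)$. $\log_{9/8}$ denotes the logarithm to base $9/8$. *)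

From Stdlib Require Import Reals Lra Lia List.
Open Scope R_scope.

Definition psi (d n : nat) : nat := Nat.pow n d.

(* list [q(m-1); ...; q(0)] of coefficients of 1/(1 - sum_{n>=1} g(n) t^n) *)
Fixpoint qlist (g : nat -> nat) (m : nat) : list nat :=
  match m with
  | O => nil
  | S m' =>
      let l := qlist g m' in
      (* q(m') = 1 if m' = 0, else sum_{k=1}^{m'} g(k) q(m'-k);
         l = [q(m'-1); ...; q(0)], so nth (k-1) l = q(m'-k) *)
      let v := match m' with
               | O => 1%nat
               | _ => fold_right Nat.add 0%nat
                        (map (fun k => (g (S k) * nth k l 0%nat)%nat) (seq 0 m'))
               end in
      v :: l
  end.

Definition qcoef (g : nat -> nat) (n : nat) : nat := hd 0%nat (qlist g (S n)).

Definition log98 (x : R) : R := ln x / ln (9/8).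

Definition Dpsi (n : nat) : R :=
  if (n =? 5)%nat then log98 512
  else match (n mod 3)%nat with
  | O => 2 * INR n * log98 2
  | 1%nat => 2 * INR n * log98 2 + log98 3 - log98 (INR n + 2)
  | _ => (INR n + 2) * log98 2
  end.

Example q_test : map (qcoef (psi 0)) (seq 0 6) = (1::1::2::4::8::16::nil)%nat.
Proof. reflexivity. Qed.
Example q_test2 : map (qcoef (psi 1)) (seq 0 5) = (1::1::3::8::21::nil)%nat.
Proof. reflexivity. Qed.

(* Expanding 1/(1 - sum_k k^d t^k), q(m) is the sum over all compositions
   (ordered partitions) of m of the d-th power of the product of the parts.
   Let maxprod m be the largest such product; a part k followed by an optimal
   composition of j is either again optimal for k + j ("tight") or loses a
   factor 9/8 at least.  By strong induction on the recurrence
   q(m) = sum_{j<m} (m-j)^d q(j) this gives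
       9^d q(m) <= nopt(m) (9 maxprod m)^d + 2^(m-1) (8 maxprod m)^d,
   where nopt(m) counts the optimal compositions (1, a(a+3)/2, a+1 for
   m = 3a, 3a+1, 3a+2), together with the crude bound q(m) <= 2^(m-1)
   maxprod(m)^d and lower bounds from explicit compositions.  For d large
   compared with n the leading terms decide: q(n-1) q(n+1) <= q(n)^2 when
   n = 0, 2 (mod 3) and q(n)^2 < q(n-1) q(n+1) when n = 1 (mod 3).  The
   hypothesis d > D^psi(n) is, after taking logarithms base 9/8, exactly the
   comparison between 8^d 2^O(n) and 9^d that these arguments need. *)

From Stdlib Require Import Reals.
Open Scope R_scope.
From Stdlib Require Import Lia Lra Arith List.

Open Scope nat_scope.

Fixpoint sumn (F : nat -> nat) (m : nat) : nat :=
  match m with O => 0 | S m' => sumn F m' + F m' end.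

Lemma fold_right_sumn (F : nat -> nat) (m : nat) :
  fold_right Nat.add 0 (map F (seq 0 m)) = sumn F m.
Proof.
  assert (Hinit : forall (l : list nat) x, fold_right Nat.add x l = fold_right Nat.add 0 l + x).
  { intros l x; induction l; simpl; lia. }
  induction m as [|m IH]; [reflexivity|].
  rewrite seq_S, map_app, fold_right_app; simpl.
  rewrite Hinit, IH; lia.
Qed.

Lemma sumn_ext (F G : nat -> nat) (m : nat) :
  (forall i, i < m -> F i = G i) -> sumn F m = sumn G m.
Proof. induction m; intros H; simpl; auto. rewrite IHm, H; auto. Qed.

Lemma sumn_le (F G : nat -> nat) (m : nat) :
  (forall i, i < m -> F i <= G i) -> sumn F m <= sumn G m.
Proof.
  induction m as [|m IH]; intros H; simpl; [lia|].
  pose proof (IH (fun i Hi => H i ltac:(lia))). pose proof (H m ltac:(lia)). lia.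
Qed.

Lemma sumn_add (F G : nat -> nat) (m : nat) :
  sumn (fun i => F i + G i) m = sumn F m + sumn G m.
Proof. induction m; simpl; lia. Qed.

Lemma sumn_mulr (F : nat -> nat) (c m : nat) :
  sumn (fun i => F i * c) m = sumn F m * c.
Proof. induction m as [|m IH]; simpl; [reflexivity|]. rewrite IH. lia. Qed.

Lemma sumn_rev (G : nat -> nat) (m : nat) : sumn (fun i => G (m - 1 - i)) m = sumn G m.
Proof.
  assert (Hhead : forall F k, sumn F (S k) = F 0 + sumn (fun i => F (S i)) k).
  { induction k; simpl in *; lia. }
  induction m as [|m IH]; [reflexivity|].
  rewrite Hhead. simpl sumn at 2.
  rewrite (sumn_ext (fun i => G (S m - 1 - S i)) (fun i => G (m - 1 - i)))
    by (intros; f_equal; lia).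
  replace (S m - 1 - 0) with m by lia. rewrite IH. lia.
Qed.

Lemma sumn_drop_zeros (F : nat -> nat) (m k : nat) :
  (forall i, i < m -> F i = 0) -> sumn F (m + k) = sumn (fun i => F (m + i)) k.
Proof.
  intros H0. induction k as [|k IH]; simpl.
  - rewrite Nat.add_0_r. induction m as [|m IHm]; simpl; [reflexivity|].
    rewrite IHm by (intros; apply H0; lia). rewrite (H0 m) by lia. reflexivity.
  - rewrite Nat.add_succ_r. simpl. rewrite IH. reflexivity.
Qed.

Lemma sumn_term (F : nat -> nat) (m j : nat) : j < m -> F j <= sumn F m.
Proof.
  induction m as [|m IH]; intros Hj; simpl; [lia|].
  destruct (Nat.eq_dec j m); [subst; lia|]. pose proof (IH ltac:(lia)). lia.
Qed.

Lemma sumn_two_terms (F : nat -> nat) (m j1 j2 : nat) :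
  j1 < j2 -> j2 < m -> F j1 + F j2 <= sumn F m.
Proof.
  induction m as [|m IH]; intros H12 H2; simpl; [lia|].
  destruct (Nat.eq_dec j2 m).
  - subst. pose proof (sumn_term F m j1 H12). lia.
  - pose proof (IH H12 ltac:(lia)). lia.
Qed.

Lemma qcoef_0 (g : nat -> nat) : qcoef g 0 = 1.
Proof. reflexivity. Qed.

Lemma qcoef_S (g : nat -> nat) (m : nat) :
  qcoef g (S m) = sumn (fun j => g (S m - j) * qcoef g j) (S m).
Proof.
  assert (Hnth : forall k i, i < k -> nth i (qlist g k) 0 = qcoef g (k - 1 - i)).
  { induction k as [|k IH]; intros i Hi; [lia|].
    change (qlist g (S k)) with (qcoef g k :: qlist g k).
    destruct i as [|i]; simpl; [f_equal; lia|]. rewrite IH by lia. f_equal; lia. }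
  unfold qcoef at 1. cbn [qlist hd].
  change (fold_right Nat.add 0 (map (fun k => g (S k) * nth k (qlist g (S m)) 0) (seq 0 (S m)))
          = sumn (fun j => g (S m - j) * qcoef g j) (S m)).
  rewrite fold_right_sumn, <- sumn_rev.
  apply sumn_ext. intros i Hi. rewrite Hnth by lia. f_equal; f_equal; lia.
Qed.

Lemma nat_ind3 (P : nat -> Prop) :
  P 0 -> P 1 -> P 2 -> P 3 -> P 4 ->
  (forall m, 2 <= m -> P m -> P (S (S (S m)))) -> forall n, P n.
Proof.
  intros H0 H1 H2 H3 H4 Hstep n. induction n as [n IH] using lt_wf_ind.
  destruct (le_lt_dec n 4) as [Hn|Hn].
  - assert (n = 0 \/ n = 1 \/ n = 2 \/ n = 3 \/ n = 4) as [->|[->|[->|[->| ->]]]] by lia;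
      assumption.
  - replace n with (S (S (S (n - 3)))) by lia. apply Hstep; [lia|]. apply IH; lia.
Qed.

(* [maxprod n] is the largest product of the parts of a composition of n
   (1 for n = 0), attained by parts 3 together with one 4, one 2, or none. *)
Fixpoint maxprod (n : nat) : nat :=
  match n with
  | 0 => 1 | 1 => 1 | 2 => 2 | 3 => 3 | 4 => 4
  | S (S (S m)) => 3 * maxprod m
  end.

Lemma maxprod_step (m : nat) : 2 <= m -> maxprod (S (S (S m))) = 3 * maxprod m.
Proof. intros Hm. destruct m as [|[|m]]; [lia|lia|reflexivity]. Qed.

Lemma maxprod_pos (n : nat) : 1 <= maxprod n.
Proof.
  induction n using nat_ind3; try (simpl; lia).
  rewrite maxprod_step by assumption. lia.
Qed.

Lemma maxprod_3a (a : nat) : maxprod (3 * a) = 3 ^ a.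
Proof.
  induction a as [|[|a] IH]; [reflexivity|reflexivity|].
  replace (3 * S (S a)) with (S (S (S (3 * S a)))) by lia.
  rewrite maxprod_step, IH by lia. simpl. lia.
Qed.

Lemma maxprod_3a2 (a : nat) : maxprod (3 * a + 2) = 2 * 3 ^ a.
Proof.
  induction a as [|a IH]; [reflexivity|].
  replace (3 * S a + 2) with (S (S (S (3 * a + 2)))) by lia.
  rewrite maxprod_step, IH by lia. simpl. lia.
Qed.

Lemma maxprod_3a4 (a : nat) : maxprod (3 * a + 4) = 4 * 3 ^ a.
Proof.
  induction a as [|a IH]; [reflexivity|].
  replace (3 * S a + 4) with (S (S (S (3 * a + 4)))) by lia.
  rewrite maxprod_step, IH by lia. simpl. lia.
Qed.

(* Concatenating compositions multiplies products. *)
Lemma maxprod_supermul (a b : nat) : maxprod a * maxprod b <= maxprod (a + b).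
Proof.
  revert b. induction a using nat_ind3; intros b.
  1-5: induction b using nat_ind3; try (simpl; lia);
       match goal with |- _ <= maxprod (?k + _) =>
         replace (k + S (S (S b))) with (S (S (S (k + b)))) by lia;
         rewrite (maxprod_step b), (maxprod_step (k + b)) by lia end; nia.
  replace (S (S (S a)) + b) with (S (S (S (a + b)))) by lia.
  rewrite (maxprod_step a), (maxprod_step (a + b)) by lia. specialize (IHa b). nia.
Qed.

(* For k >= 5 a part k is never optimal: splitting it gains a factor 9/8 at least. *)
Lemma maxprod_large (k : nat) : 5 <= k -> 9 * k <= 8 * maxprod k.
Proof.
  induction k as [k IH] using lt_wf_ind. intros Hk.
  destruct (le_lt_dec k 7) as [Hsmall|Hbig].
  - assert (k = 5 \/ k = 6 \/ k = 7) as [->|[->| ->]] by lia; simpl; lia.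
  - replace k with (S (S (S (k - 3)))) by lia. rewrite maxprod_step by lia.
    pose proof (IH (k - 3) ltac:(lia) ltac:(lia)). lia.
Qed.

(* The gap dichotomy: prefixing a part k to an optimal composition of j either
   gives an optimal composition of k + j, or loses a factor 9/8 at least. *)
Lemma maxprod_gap (k j : nat) : 1 <= k ->
  k * maxprod j = maxprod (k + j) \/ 9 * k * maxprod j <= 8 * maxprod (k + j).
Proof.
  intros Hk. destruct (le_lt_dec k 4) as [Hsmall|Hbig].
  - induction j using nat_ind3;
      try (assert (k = 1 \/ k = 2 \/ k = 3 \/ k = 4) as [->|[->|[->| ->]]] by lia;
           simpl; lia).
    replace (k + S (S (S j))) with (S (S (S (k + j)))) by lia.
    rewrite (maxprod_step j), (maxprod_step (k + j)) by lia. lia.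
  - right. pose proof (maxprod_large k ltac:(lia)). pose proof (maxprod_supermul k j). nia.
Qed.

Lemma maxprod_mul_le (k j : nat) : 1 <= k -> k * maxprod j <= maxprod (k + j).
Proof. intros Hk. destruct (maxprod_gap k j Hk); lia. Qed.

Definition tightb (k j : nat) : bool := k * maxprod j =? maxprod (k + j).

Lemma tight_gap (k j : nat) : 1 <= k -> tightb k j = false ->
  9 * k * maxprod j <= 8 * maxprod (k + j).
Proof.
  intros Hk Ht. apply Nat.eqb_neq in Ht. destruct (maxprod_gap k j Hk); [contradiction|assumption].
Qed.

Lemma tight_large (k j : nat) : 5 <= k -> tightb k j = false.
Proof.
  intros Hk. apply Nat.eqb_neq. intros Heq.
  pose proof (maxprod_large k Hk). pose proof (maxprod_supermul k j).
  pose proof (maxprod_pos j). nia.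
Qed.

Lemma tight_periodic (k b j : nat) : 2 <= j -> tightb k (3 * b + j) = tightb k j.
Proof.
  intros Hj. induction b as [|b IH]; [reflexivity|].
  rewrite <- IH. unfold tightb.
  replace (3 * S b + j) with (S (S (S (3 * b + j)))) by lia.
  replace (k + S (S (S (3 * b + j)))) with (S (S (S (k + (3 * b + j))))) by lia.
  rewrite (maxprod_step (3 * b + j)), (maxprod_step (k + (3 * b + j))) by lia.
  destruct (Nat.eqb_spec (k * maxprod (3 * b + j)) (maxprod (k + (3 * b + j))));
    [apply Nat.eqb_eq|apply Nat.eqb_neq]; lia.
Qed.

Lemma div_mod_3 (a r : nat) : r < 3 -> (3 * a + r) / 3 = a /\ (3 * a + r) mod 3 = r.
Proof.
  intros Hr. split.
  - symmetry. apply (Nat.div_unique _ _ _ r); lia.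
  - symmetry. apply (Nat.mod_unique _ _ a); lia.
Qed.

(* [count1 a] = a(a+3)/2 is the number of optimal compositions of 3a+1 for
   a >= 1: the arrangements of 3^(a-1)·4 and of 3^(a-1)·2·2. *)
Fixpoint count1 (a : nat) : nat :=
  match a with 0 => 0 | S a' => count1 a' + a' + 2 end.

Lemma count1_closed (a : nat) : 2 * count1 a = a * (a + 3).
Proof. induction a; simpl count1; nia. Qed.

(* [nopt m] is the number of compositions of m with maximal product [maxprod m]. *)
Definition nopt (m : nat) : nat :=
  match m mod 3 with
  | 0 => 1
  | 1 => if m =? 1 then 1 else count1 (m / 3)
  | _ => m / 3 + 1
  end.

Lemma nopt_3a (a : nat) : nopt (3 * a) = 1.
Proof.
  unfold nopt. destruct (div_mod_3 a 0 ltac:(lia)) as [_ Hm].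
  rewrite Nat.add_0_r in Hm. rewrite Hm. reflexivity.
Qed.

Lemma nopt_3a2 (a : nat) : nopt (3 * a + 2) = a + 1.
Proof.
  unfold nopt. destruct (div_mod_3 a 2 ltac:(lia)) as [Hd Hm]. rewrite Hm, Hd. reflexivity.
Qed.

Lemma nopt_3a4 (a : nat) : nopt (3 * a + 4) = count1 (a + 1).
Proof.
  unfold nopt. replace (3 * a + 4) with (3 * (a + 1) + 1) by lia.
  destruct (div_mod_3 (a + 1) 1 ltac:(lia)) as [Hd Hm]. rewrite Hm, Hd.
  replace (3 * (a + 1) + 1 =? 1) with false by (symmetry; apply Nat.eqb_neq; lia).
  reflexivity.
Qed.

(* The optimal compositions of M beginning with the part M - j, which exist
   only if that part is tight with respect to j. *)
Definition optcontrib (M j : nat) : nat := if tightb (M - j) j then nopt j else 0.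

(* Only the parts 1..4 can begin an optimal composition. *)
Lemma optcontrib_last4 (M : nat) : 4 <= M ->
  sumn (optcontrib M) M = optcontrib M (M - 4) + optcontrib M (M - 3)
                          + optcontrib M (M - 2) + optcontrib M (M - 1).
Proof.
  intros HM. replace M with ((M - 4) + 4) at 2 by lia.
  rewrite sumn_drop_zeros.
  - simpl. replace (M - 4 + 1) with (M - 3) by lia. replace (M - 4 + 2) with (M - 2) by lia.
    replace (M - 4 + 3) with (M - 1) by lia. rewrite Nat.add_0_r. lia.
  - intros i Hi. unfold optcontrib. rewrite tight_large by lia. reflexivity.
Qed.

Lemma optcontrib_periodic (b r s : nat) : 2 <= s ->
  optcontrib (3 * b + r) (3 * b + s) = if tightb (r - s) s then nopt (3 * b + s) else 0.
Proof.
  intros Hs. unfold optcontrib.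
  replace (3 * b + r - (3 * b + s)) with (r - s) by lia. rewrite tight_periodic by lia.
  reflexivity.
Qed.

Lemma optcontrib_sum_periodic (b r : nat) : 6 <= r ->
  sumn (optcontrib (3 * b + r)) (3 * b + r) =
    (if tightb 4 (r - 4) then nopt (3 * b + (r - 4)) else 0)
    + (if tightb 3 (r - 3) then nopt (3 * b + (r - 3)) else 0)
    + (if tightb 2 (r - 2) then nopt (3 * b + (r - 2)) else 0)
    + (if tightb 1 (r - 1) then nopt (3 * b + (r - 1)) else 0).
Proof.
  intros Hr. rewrite optcontrib_last4 by lia.
  replace (3 * b + r - 4) with (3 * b + (r - 4)) by lia.
  replace (3 * b + r - 3) with (3 * b + (r - 3)) by lia.
  replace (3 * b + r - 2) with (3 * b + (r - 2)) by lia.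
  replace (3 * b + r - 1) with (3 * b + (r - 1)) by lia.
  rewrite !optcontrib_periodic by lia.
  replace (r - (r - 4)) with 4 by lia. replace (r - (r - 3)) with 3 by lia.
  replace (r - (r - 2)) with 2 by lia. replace (r - (r - 1)) with 1 by lia.
  reflexivity.
Qed.

Ltac eval_tight :=
  repeat match goal with
    |- context [tightb ?k ?j] =>
      let v := eval vm_compute in (tightb k j) in change (tightb k j) with v
  end; cbv iota.

(* The optimal compositions of M, sorted by their first part, number at most
   [nopt M] (in fact exactly [nopt M]). *)
Lemma optcontrib_sum (M : nat) : 1 <= M -> sumn (optcontrib M) M <= nopt M.
Proof.
  intros HM. destruct (le_lt_dec M 5) as [Hsmall|Hbig].
  - assert (M = 1 \/ M = 2 \/ M = 3 \/ M = 4 \/ M = 5) as [->|[->|[->|[->| ->]]]] by lia;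
      vm_compute; lia.
  - assert (Hdec : exists b, M = 3 * b + 6 \/ M = 3 * b + 7 \/ M = 3 * b + 8).
    { exists (M / 3 - 2).
      pose proof (Nat.div_mod_eq M 3). pose proof (Nat.mod_upper_bound M 3 ltac:(lia)). lia. }
    destruct Hdec as [b [->|[->| ->]]];
      rewrite optcontrib_sum_periodic by lia; cbn [Nat.sub]; eval_tight.
    + replace (3 * b + 3) with (3 * (b + 1)) by lia.
      replace (3 * b + 6) with (3 * (b + 2)) by lia. rewrite !nopt_3a. lia.
    + replace (3 * b + 3) with (3 * (b + 1)) by lia.
      replace (3 * b + 5) with (3 * (b + 1) + 2) by lia.
      replace (3 * b + 7) with (3 * (b + 1) + 4) by lia.
      rewrite nopt_3a, nopt_3a2, !nopt_3a4. replace (b + 1 + 1) with (S (b + 1)) by lia.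
      simpl count1. lia.
    + replace (3 * b + 5) with (3 * (b + 1) + 2) by lia.
      replace (3 * b + 6) with (3 * (b + 2)) by lia.
      replace (3 * b + 8) with (3 * (b + 2) + 2) by lia. rewrite nopt_3a, !nopt_3a2. lia.
Qed.

(* [ncomp m] = 2^(m-1) is the number of compositions of m (1 for m = 0). *)
Definition ncomp (m : nat) : nat := match m with 0 => 1 | S m' => 2 ^ m' end.

Lemma ncomp_sum (m : nat) : sumn ncomp (S m) = 2 ^ m.
Proof.
  induction m as [|m IH]; [reflexivity|].
  change (sumn ncomp (S (S m))) with (sumn ncomp (S m) + 2 ^ m). rewrite IH. simpl. lia.
Qed.

Section Bounds.
Variable d : nat.
Notation Q := (qcoef (psi d)).

Lemma Q_S (m : nat) : Q (S m) = sumn (fun j => (S m - j) ^ d * Q j) (S m).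
Proof. apply qcoef_S. Qed.

Lemma Q_term (m j : nat) : j <= m -> (S m - j) ^ d * Q j <= Q (S m).
Proof. intros Hj. rewrite Q_S. apply (sumn_term (fun j => (S m - j) ^ d * Q j)). lia. Qed.

Lemma Q_pos (m : nat) : 1 <= Q m.
Proof.
  induction m as [|m IH]; [rewrite qcoef_0; lia|].
  pose proof (Q_term m m (le_n _)) as H. replace (S m - m) with 1 in H by lia.
  rewrite Nat.pow_1_l in H. lia.
Qed.

(* Every composition of m contributes at most [maxprod m ^ d]. *)
Lemma Q_crude (m : nat) : Q m <= ncomp m * maxprod m ^ d.
Proof.
  induction m as [m IH] using lt_wf_ind.
  destruct m as [|m]; [rewrite qcoef_0; simpl; rewrite Nat.pow_1_l; lia|].
  rewrite Q_S. change (ncomp (S m)) with (2 ^ m). rewrite <- ncomp_sum, <- sumn_mulr.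
  apply sumn_le. intros j Hj.
  pose proof (IH j ltac:(lia)) as Hq.
  pose proof (maxprod_mul_le (S m - j) j ltac:(lia)) as Hk.
  replace (S m - j + j) with (S m) in Hk by lia.
  apply Nat.pow_le_mono_l with (c := d) in Hk. rewrite Nat.pow_mul_l in Hk.
  apply Nat.le_trans with ((S m - j) ^ d * (ncomp j * maxprod j ^ d)); [nia|].
  nia.
Qed.

(* One term of the refined bound: a tight first part k keeps the leading
   coefficient, a non-tight one loses a factor (8/9)^d. *)
Lemma Q_fine_term (k j : nat) : 1 <= k ->
  9 ^ d * Q j <= nopt j * (9 * maxprod j) ^ d + ncomp j * (8 * maxprod j) ^ d ->
  9 ^ d * (k ^ d * Q j) <=
    (if tightb k j then nopt j else 0) * (9 * maxprod (k + j)) ^ d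
    + ncomp j * (8 * maxprod (k + j)) ^ d.
Proof.
  intros Hk IH. destruct (tightb k j) eqn:Ht.
  - apply Nat.eqb_eq in Ht. rewrite <- Ht, !Nat.pow_mul_l in *.
    assert (Hmul : k ^ d * (9 ^ d * Q j)
              <= k ^ d * (nopt j * (9 ^ d * maxprod j ^ d) + ncomp j * (8 ^ d * maxprod j ^ d)))
      by (apply Nat.mul_le_mono_l; exact IH).
    nia.
  - pose proof (tight_gap k j Hk Ht) as Hgap. pose proof (Q_crude j) as Hc.
    apply Nat.pow_le_mono_l with (c := d) in Hgap. rewrite !Nat.pow_mul_l in *.
    assert (Hmul : 9 ^ d * (k ^ d * Q j) <= 9 ^ d * (k ^ d * (ncomp j * maxprod j ^ d)))
      by (apply Nat.mul_le_mono_l, Nat.mul_le_mono_l; exact Hc).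
    nia.
Qed.

Lemma Q_fine (m : nat) :
  9 ^ d * Q m <= nopt m * (9 * maxprod m) ^ d + ncomp m * (8 * maxprod m) ^ d.
Proof.
  induction m as [m IH] using lt_wf_ind.
  destruct m as [|m]; [rewrite qcoef_0; simpl; lia|].
  rewrite Q_S, Nat.mul_comm, <- sumn_mulr.
  apply Nat.le_trans with
    (sumn (fun j => optcontrib (S m) j * (9 * maxprod (S m)) ^ d
                    + ncomp j * (8 * maxprod (S m)) ^ d) (S m)).
  - apply sumn_le. intros j Hj. unfold optcontrib.
    pose proof (Q_fine_term (S m - j) j ltac:(lia) (IH j ltac:(lia))) as H.
    replace (S m - j + j) with (S m) in H by lia. lia.
  - rewrite sumn_add, !sumn_mulr, ncomp_sum. change (ncomp (S m)) with (2 ^ m).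
    pose proof (optcontrib_sum (S m) ltac:(lia)). nia.
Qed.

(* Lower bounds from explicit compositions: 3+...+3, and the a+1
   arrangements of a threes and one two. *)
Lemma Q_low_3a (a : nat) : (3 ^ a) ^ d <= Q (3 * a).
Proof.
  induction a as [|a IH]; [simpl; rewrite Nat.pow_1_l, qcoef_0; lia|].
  pose proof (Q_term (S (S (3 * a))) (3 * a) ltac:(lia)) as H.
  replace (S (S (S (3 * a))) - 3 * a) with 3 in H by lia.
  replace (S (S (S (3 * a)))) with (3 * S a) in H by lia.
  rewrite Nat.pow_succ_r', Nat.pow_mul_l.
  assert (3 ^ d * (3 ^ a) ^ d <= 3 ^ d * Q (3 * a)) by (apply Nat.mul_le_mono_l; exact IH).
  lia.
Qed.

Lemma Q_low_3a2 (a : nat) : (a + 1) * (2 * 3 ^ a) ^ d <= Q (3 * a + 2).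
Proof.
  induction a as [|a IH].
  - pose proof (Q_term 1 0 ltac:(lia)) as H. simpl in *. rewrite qcoef_0 in H. lia.
  - pose proof (sumn_two_terms (fun j => (S (3 * a + 4) - j) ^ d * Q j) (S (3 * a + 4))
                  (3 * a + 2) (3 * a + 3) ltac:(lia) ltac:(lia)) as H2.
    cbv beta in H2. rewrite <- Q_S in H2.
    replace (S (3 * a + 4) - (3 * a + 2)) with 3 in H2 by lia.
    replace (S (3 * a + 4) - (3 * a + 3)) with 2 in H2 by lia.
    replace (S (3 * a + 4)) with (3 * S a + 2) in H2 by lia.
    replace (3 * a + 3) with (3 * S a) in H2 by lia.
    pose proof (Q_low_3a (S a)) as H0.
    rewrite Nat.pow_succ_r' in *. rewrite !Nat.pow_mul_l in *.
    assert (3 ^ d * ((a + 1) * (2 ^ d * (3 ^ a) ^ d)) <= 3 ^ d * Q (3 * a + 2))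
      by (apply Nat.mul_le_mono_l; exact IH).
    assert (2 ^ d * (3 ^ d * (3 ^ a) ^ d) <= 2 ^ d * Q (3 * S a))
      by (apply Nat.mul_le_mono_l; exact H0).
    nia.
Qed.
End Bounds.

Lemma residue_decomp (n : nat) : 3 <= n -> exists b, n = 3 * b + 3 + n mod 3.
Proof.
  intros Hn. exists (n / 3 - 1).
  pose proof (Nat.div_mod_eq n 3). pose proof (Nat.mod_upper_bound n 3 ltac:(lia)). lia.
Qed.

Section Residues.
Variable d : nat.
Notation Q := (qcoef (psi d)).

(* The comparisons below are polynomial in 2^d, 3^d and 3^(bd). *)
Lemma pow_4 : 4 ^ d = 2 ^ d * 2 ^ d.
Proof. rewrite <- Nat.pow_mul_l. reflexivity. Qed.

Lemma pow_8 : 8 ^ d = 2 ^ d * 2 ^ d * 2 ^ d.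
Proof. rewrite <- !Nat.pow_mul_l. reflexivity. Qed.

Lemma pow_9 : 9 ^ d = 3 ^ d * 3 ^ d.
Proof. rewrite <- Nat.pow_mul_l. reflexivity. Qed.

Lemma Q_upper_3b2 (b : nat) : Q (3 * b + 2) <= 2 ^ (3 * b + 1) * (2 ^ d * (3 ^ b) ^ d).
Proof.
  pose proof (Q_crude d (3 * b + 2)) as H.
  replace (3 * b + 2) with (S (3 * b + 1)) in H at 2 by lia.
  rewrite maxprod_3a2, Nat.pow_mul_l in H. exact H.
Qed.

Lemma Q_upper_3b4 (b : nat) : Q (3 * b + 4) <= 2 ^ (3 * b + 3) * (2 ^ d * 2 ^ d * (3 ^ b) ^ d).
Proof.
  pose proof (Q_crude d (3 * b + 4)) as H.
  replace (3 * b + 4) with (S (3 * b + 3)) in H at 2 by lia.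
  rewrite maxprod_3a4, !Nat.pow_mul_l, pow_4 in H. exact H.
Qed.

Lemma Q_lower_3b3 (b : nat) : 3 ^ d * (3 ^ b) ^ d <= Q (3 * b + 3).
Proof.
  pose proof (Q_low_3a d (b + 1)) as H. replace (3 * (b + 1)) with (3 * b + 3) in H by lia.
  rewrite Nat.pow_add_r, Nat.pow_1_r, Nat.pow_mul_l in H. lia.
Qed.

Lemma Q_lower_3b5 (b : nat) : (b + 2) * (2 ^ d * 3 ^ d * (3 ^ b) ^ d) <= Q (3 * b + 5).
Proof.
  pose proof (Q_low_3a2 d (b + 1)) as H. replace (3 * (b + 1) + 2) with (3 * b + 5) in H by lia.
  rewrite Nat.pow_add_r, Nat.pow_1_r, !Nat.pow_mul_l in H.
  replace (b + 1 + 1) with (b + 2) in H by lia. lia.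
Qed.

Lemma Q_fine_3b4 (b : nat) :
  3 ^ d * 3 ^ d * Q (3 * b + 4)
  <= count1 (b + 1) * (3 ^ d * 3 ^ d) * (2 ^ d * 2 ^ d * (3 ^ b) ^ d)
     + 2 ^ (3 * b + 3) * (2 ^ d * 2 ^ d * 2 ^ d) * (2 ^ d * 2 ^ d * (3 ^ b) ^ d).
Proof.
  pose proof (Q_fine d (3 * b + 4)) as H.
  replace (ncomp (3 * b + 4)) with (2 ^ (3 * b + 3)) in H
    by (replace (3 * b + 4) with (S (3 * b + 3)) by lia; reflexivity).
  rewrite nopt_3a4, maxprod_3a4, !Nat.pow_mul_l, pow_4, pow_8, pow_9 in H. lia.
Qed.

Lemma Q_fine_3b6 (b : nat) :
  3 ^ d * 3 ^ d * Q (3 * b + 6)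
  <= 3 ^ d * 3 ^ d * (3 ^ d * 3 ^ d * (3 ^ b) ^ d)
     + 4 * 2 ^ (3 * b + 3) * (2 ^ d * 2 ^ d * 2 ^ d) * (3 ^ d * 3 ^ d * (3 ^ b) ^ d).
Proof.
  pose proof (Q_fine d (3 * b + 6)) as H.
  replace (ncomp (3 * b + 6)) with (4 * 2 ^ (3 * b + 3)) in H
    by (replace (3 * b + 6) with (S (2 + (3 * b + 3))) by lia;
        change (4 * 2 ^ (3 * b + 3) = 2 ^ (2 + (3 * b + 3)));
        rewrite (Nat.pow_add_r 2 2 (3 * b + 3)); reflexivity).
  replace (3 * b + 6) with (3 * (b + 2)) in H by lia.
  rewrite nopt_3a, maxprod_3a, Nat.pow_add_r in H.
  replace (3 * (b + 2)) with (3 * b + 6) in H by lia.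
  change (3 ^ 2) with 9 in H. rewrite !Nat.pow_mul_l, pow_8, pow_9 in H. lia.
Qed.

(* n = 3b+3: the three values are dominated by single optimal compositions
   and q(n-1) q(n+1) <= q(n)^2 once 2^(2n) 8^d < 9^d. *)
Lemma concave_3b3 (b : nat) :
  2 ^ (6 * b + 6) * 8 ^ d < 9 ^ d -> Q (3 * b + 2) * Q (3 * b + 4) <= Q (3 * b + 3) * Q (3 * b + 3).
Proof.
  intros H. rewrite pow_8, pow_9 in H.
  pose proof (Q_upper_3b2 b) as U2. pose proof (Q_upper_3b4 b) as U4.
  pose proof (Q_lower_3b3 b) as L3.
  set (x := 2 ^ d) in *. set (y := 3 ^ d) in *. set (z := (3 ^ b) ^ d) in *.
  set (p := 2 ^ (3 * b + 1) * 2 ^ (3 * b + 3)).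
  assert (Hp : 2 ^ (6 * b + 6) = 4 * p)
    by (unfold p; rewrite <- Nat.pow_add_r;
        replace (6 * b + 6) with (2 + (3 * b + 1 + (3 * b + 3))) by lia;
        rewrite (Nat.pow_add_r 2 2); reflexivity).
  assert (Hupper : Q (3 * b + 2) * Q (3 * b + 4) <= p * (x * x * x) * (z * z))
    by (unfold p; pose proof (Nat.mul_le_mono _ _ _ _ U2 U4); lia).
  assert (Hgap : p * (x * x * x) * (z * z) <= y * y * (z * z))
    by (apply Nat.mul_le_mono_r; lia).
  assert (Hlower : y * y * (z * z) <= Q (3 * b + 3) * Q (3 * b + 3))
    by (pose proof (Nat.mul_le_mono _ _ _ _ L3 L3); lia).
  lia.
Qed.

(* n = 3b+4: the many optimal compositions of n ± 1 win, and
   q(n)^2 < q(n-1) q(n+1) once 2^(2n) 3 8^d < (n+2) 9^d. *)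
Lemma convex_3b4 (b : nat) :
  2 ^ (6 * b + 8) * 3 * 8 ^ d < (3 * b + 6) * 9 ^ d ->
  Q (3 * b + 4) * Q (3 * b + 4) < Q (3 * b + 3) * Q (3 * b + 5).
Proof.
  intros H. rewrite pow_8, pow_9 in H.
  pose proof (Q_upper_3b4 b) as U4. pose proof (Q_lower_3b3 b) as L3.
  pose proof (Q_lower_3b5 b) as L5.
  set (x := 2 ^ d) in *. set (y := 3 ^ d) in *. set (z := (3 ^ b) ^ d) in *.
  set (p := 2 ^ (3 * b + 3) * 2 ^ (3 * b + 3)).
  assert (Hp : 2 ^ (6 * b + 8) = 4 * p)
    by (unfold p; rewrite <- Nat.pow_add_r;
        replace (6 * b + 8) with (2 + (3 * b + 3 + (3 * b + 3))) by lia;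
        rewrite (Nat.pow_add_r 2 2); reflexivity).
  assert (Hxz : 0 < x * (z * z))
    by (unfold x, z; pose proof (Nat.pow_nonzero 2 d); pose proof (Nat.pow_nonzero (3 ^ b) d);
        pose proof (Nat.pow_nonzero 3 b); nia).
  assert (Hupper : Q (3 * b + 4) * Q (3 * b + 4) <= p * (x * x * x) * (x * (z * z)))
    by (unfold p; pose proof (Nat.mul_le_mono _ _ _ _ U4 U4); lia).
  assert (Hgap : p * (x * x * x) * (x * (z * z)) < (b + 2) * (y * y) * (x * (z * z)))
    by (apply Nat.mul_lt_mono_pos_r; lia).
  assert (Hlower : (b + 2) * (y * y) * (x * (z * z)) <= Q (3 * b + 3) * Q (3 * b + 5))
    by (pose proof (Nat.mul_le_mono _ _ _ _ L3 L5); lia).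
  lia.
Qed.

(* The leading coefficients at 3b+4 and 3b+6 multiply to count1 (b+1) * 1, well
   below the square (b+2)^2 of the one at 3b+5: enough room to absorb the
   error terms v <= X/16, which stand for 2^(3b+3) 8^d <= 9^d / 16. *)
Lemma leading_coeff_ineq (t c X v : nat) :
  2 * t = c * (c + 3) -> 16 * v <= X -> (t * X + v) * (X + 4 * v) <= (c + 1) * (c + 1) * (X * X).
Proof.
  intros Ht Hv.
  assert (16 * v * (t * X) <= X * (t * X)) by (apply Nat.mul_le_mono_r; exact Hv).
  assert (16 * v * X <= X * X) by (apply Nat.mul_le_mono_r; exact Hv).
  assert (16 * v * v <= X * v) by (apply Nat.mul_le_mono_r; exact Hv).
  nia.
Qed.

Lemma concave_3b5 (b : nat) :
  2 ^ (3 * b + 7) * 8 ^ d < 9 ^ d -> Q (3 * b + 4) * Q (3 * b + 6) <= Q (3 * b + 5) * Q (3 * b + 5).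
Proof.
  intros H. rewrite pow_8, pow_9 in H.
  pose proof (Q_fine_3b4 b) as F4. pose proof (Q_fine_3b6 b) as F6.
  pose proof (Q_lower_3b5 b) as L5.
  pose proof (count1_closed (b + 1)) as Hc.
  set (x := 2 ^ d) in *. set (y := 3 ^ d) in *. set (z := (3 ^ b) ^ d) in *.
  set (X := y * y) in *. set (v := 2 ^ (3 * b + 3) * (x * x * x)) in *.
  assert (Hv : 16 * v <= X)
    by (unfold v; replace (3 * b + 7) with (4 + (3 * b + 3)) in H by lia;
        rewrite (Nat.pow_add_r 2 4) in H; change (2 ^ 4) with 16 in H; lia).
  assert (F4' : X * Q (3 * b + 4) <= (count1 (b + 1) * X + v) * (x * x * z)) by lia.
  assert (F6' : X * Q (3 * b + 6) <= (X + 4 * v) * (X * z)) by lia.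
  assert (Hupper : (X * X) * (Q (3 * b + 4) * Q (3 * b + 6))
                   <= ((count1 (b + 1) * X + v) * (X + 4 * v)) * (x * x * X * (z * z)))
    by (pose proof (Nat.mul_le_mono _ _ _ _ F4' F6'); lia).
  assert (Hlead : ((count1 (b + 1) * X + v) * (X + 4 * v)) * (x * x * X * (z * z))
                  <= (X * X) * ((b + 2) * (x * y * z)) * ((b + 2) * (x * y * z))).
  { pose proof (leading_coeff_ineq _ _ _ _ Hc Hv) as K.
    replace (b + 1 + 1) with (b + 2) in K by lia.
    apply Nat.mul_le_mono_r with (p := x * x * X * (z * z)) in K. unfold X in *. lia. }
  assert (Hlower : ((b + 2) * (x * y * z)) * ((b + 2) * (x * y * z))
                   <= Q (3 * b + 5) * Q (3 * b + 5))
    by (apply Nat.mul_le_mono; lia).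
  assert (HX : 0 < X * X) by (unfold X, y; pose proof (Nat.pow_nonzero 3 d); nia).
  apply (Nat.mul_le_mono_pos_l _ _ (X * X) HX).
  pose proof (Nat.mul_le_mono_l _ _ (X * X) Hlower). lia.
Qed.

Lemma concave_0mod3 (n : nat) : 3 <= n -> n mod 3 = 0 ->
  2 ^ (2 * n) * 8 ^ d < 9 ^ d -> Q (n - 1) * Q (n + 1) <= Q n * Q n.
Proof.
  intros Hn Hr H. destruct (residue_decomp n Hn) as [b Hb]. rewrite Hr in Hb. subst n.
  replace (2 * (3 * b + 3 + 0)) with (6 * b + 6) in H by lia.
  replace (3 * b + 3 + 0 - 1) with (3 * b + 2) by lia.
  replace (3 * b + 3 + 0 + 1) with (3 * b + 4) by lia.
  rewrite Nat.add_0_r. exact (concave_3b3 b H).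
Qed.

Lemma convex_1mod3 (n : nat) : 3 <= n -> n mod 3 = 1 ->
  2 ^ (2 * n) * 3 * 8 ^ d < (n + 2) * 9 ^ d -> Q n * Q n < Q (n - 1) * Q (n + 1).
Proof.
  intros Hn Hr H. destruct (residue_decomp n Hn) as [b Hb]. rewrite Hr in Hb. subst n.
  replace (2 * (3 * b + 3 + 1)) with (6 * b + 8) in H by lia.
  replace (3 * b + 3 + 1 + 2) with (3 * b + 6) in H by lia.
  replace (3 * b + 3 + 1 - 1) with (3 * b + 3) by lia.
  replace (3 * b + 3 + 1 + 1) with (3 * b + 5) by lia.
  replace (3 * b + 3 + 1) with (3 * b + 4) by lia. exact (convex_3b4 b H).
Qed.

Lemma concave_2mod3 (n : nat) : 3 <= n -> n mod 3 = 2 ->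
  2 ^ (n + 2) * 8 ^ d < 9 ^ d -> Q (n - 1) * Q (n + 1) <= Q n * Q n.
Proof.
  intros Hn Hr H. destruct (residue_decomp n Hn) as [b Hb]. rewrite Hr in Hb. subst n.
  replace (3 * b + 3 + 2 + 2) with (3 * b + 7) in H by lia.
  replace (3 * b + 3 + 2 - 1) with (3 * b + 4) by lia.
  replace (3 * b + 3 + 2 + 1) with (3 * b + 6) by lia.
  replace (3 * b + 3 + 2) with (3 * b + 5) by lia. exact (concave_3b5 b H).
Qed.
End Residues.

Open Scope R_scope.

Lemma ln_98_pos : 0 < ln (9 / 8).
Proof. rewrite <- ln_1. apply ln_increasing; lra. Qed.

Lemma log98_1 : log98 (INR 1) = 0.
Proof. unfold log98. simpl INR. rewrite ln_1. lra. Qed.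

Lemma log98_mult (x y : R) : 0 < x -> 0 < y -> log98 (x * y) = log98 x + log98 y.
Proof. intros Hx Hy. unfold log98. rewrite ln_mult by assumption. lra. Qed.

Lemma log98_pow2 (k : nat) : log98 (INR (2 ^ k)) = INR k * log98 2.
Proof.
  unfold log98. rewrite pow_INR, ln_pow by (simpl; lra). simpl (INR 2).
  replace (1 + 1) with 2 by lra. lra.
Qed.

Lemma pow_compare_of_log98 (A B d : nat) : (0 < A)%nat -> (0 < B)%nat ->
  log98 (INR A) - log98 (INR B) < INR d -> (A * 8 ^ d < B * 9 ^ d)%nat.
Proof.
  intros HA HB H. apply INR_lt. rewrite !mult_INR, !pow_INR.
  assert (HA' : 0 < INR A) by (apply lt_0_INR; lia).
  assert (HB' : 0 < INR B) by (apply lt_0_INR; lia).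
  pose proof ln_98_pos as Hl.
  replace (INR 8) with 8 by (simpl; lra). replace (INR 9) with (9 / 8 * 8) by (simpl; lra).
  rewrite Rpow_mult_distr.
  assert (P8 : 0 < 8 ^ d) by (apply pow_lt; lra).
  assert (P98 : 0 < (9 / 8) ^ d) by (apply pow_lt; lra).
  apply ln_lt_inv;
    [apply Rmult_lt_0_compat; assumption|repeat apply Rmult_lt_0_compat; assumption|].
  rewrite !ln_mult, !ln_pow by (lra || nra).
  unfold log98 in H. apply (Rmult_lt_compat_r (ln (9 / 8))) in H; [|lra].
  replace ((ln (INR A) / ln (9 / 8) - ln (INR B) / ln (9 / 8)) * ln (9 / 8))
    with (ln (INR A) - ln (INR B)) in H by (field; lra).
  lra.
Qed.

Lemma ratio_lt_1_iff (a b c : nat) : (0 < b * c)%nat ->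
  (INR a) ^ 2 / (INR b * INR c) < 1 <-> (a * a < b * c)%nat.
Proof.
  intros H.
  assert (Hb : 0 < INR b) by (apply lt_0_INR; nia).
  assert (Hc : 0 < INR c) by (apply lt_0_INR; nia).
  assert (Heq : INR a ^ 2 / (INR b * INR c) * (INR b * INR c) = INR (a * a))
    by (rewrite mult_INR; field; lra).
  split; intros H1.
  - apply INR_lt. rewrite <- Heq, mult_INR.
    pose proof (Rmult_lt_compat_r (INR b * INR c) _ _ ltac:(nra) H1). lra.
  - apply lt_INR in H1. apply (Rmult_lt_reg_r (INR b * INR c)); [nra|].
    rewrite Heq, Rmult_1_l, <- mult_INR. exact H1.
Qed.

Lemma threshold_0mod3 (n d : nat) : (n mod 3 = 0)%nat -> INR d > Dpsi n ->
  (2 ^ (2 * n) * 8 ^ d < 9 ^ d)%nat.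
Proof.
  intros Hr Hd. unfold Dpsi in Hd.
  replace (n =? 5)%nat with false in Hd by (symmetry; apply Nat.eqb_neq; intros ->; discriminate).
  rewrite Hr in Hd.
  enough (H : (2 ^ (2 * n) * 8 ^ d < 1 * 9 ^ d)%nat) by lia.
  apply pow_compare_of_log98; [pose proof (Nat.pow_nonzero 2 (2 * n)); lia|lia|].
  rewrite log98_pow2, log98_1, mult_INR. simpl (INR 2). lra.
Qed.

Lemma threshold_1mod3 (n d : nat) : (n mod 3 = 1)%nat -> INR d > Dpsi n ->
  (2 ^ (2 * n) * 3 * 8 ^ d < (n + 2) * 9 ^ d)%nat.
Proof.
  intros Hr Hd. unfold Dpsi in Hd.
  replace (n =? 5)%nat with false in Hd by (symmetry; apply Nat.eqb_neq; intros ->; discriminate).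
  rewrite Hr in Hd.
  apply pow_compare_of_log98; [pose proof (Nat.pow_nonzero 2 (2 * n)); lia|lia|].
  rewrite mult_INR, log98_mult, log98_pow2, plus_INR, mult_INR
    by (apply lt_0_INR; pose proof (Nat.pow_nonzero 2 (2 * n)); lia || (simpl; lra)).
  simpl (INR 2). simpl (INR 3). replace (1 + 1 + 1) with 3 by lra.
  replace (1 + 1) with 2 by lra. lra.
Qed.

Lemma threshold_2mod3 (n d : nat) : (n mod 3 = 2)%nat -> INR d > Dpsi n ->
  (2 ^ (n + 2) * 8 ^ d < 9 ^ d)%nat.
Proof.
  intros Hr Hd. unfold Dpsi in Hd.
  enough (H : (2 ^ (n + 2) * 8 ^ d < 1 * 9 ^ d)%nat) by lia.
  destruct (Nat.eqb_spec n 5) as [->|Hn5].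
  - (* the exceptional value n = 5 comes with the stronger bound 2^9 8^d < 9^d *)
    assert (H9 : (2 ^ 9 * 8 ^ d < 1 * 9 ^ d)%nat).
    { apply pow_compare_of_log98; [simpl; lia|lia|].
      rewrite log98_1. replace (INR (2 ^ 9)) with 512 by (simpl; lra). lra. }
    pose proof (Nat.pow_le_mono_r 2 7 9 ltac:(lia) ltac:(lia)). simpl (5 + 2)%nat. nia.
  - rewrite Hr in Hd.
    apply pow_compare_of_log98; [pose proof (Nat.pow_nonzero 2 (n + 2)); lia|lia|].
    rewrite log98_pow2, log98_1, plus_INR. simpl (INR 2). lra.
Qed.

Theorem corollary1 (n d : nat) :
  (3 <= n)%nat -> INR d > Dpsi n ->
  ((INR (qcoef (psi d) n))^2 / (INR (qcoef (psi d) (n-1)) * INR (qcoef (psi d) (n+1))) < 1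
   <-> (n mod 3 = 1)%nat).
Proof.
  intros Hn Hd.
  rewrite ratio_lt_1_iff by (pose proof (Q_pos d (n - 1)); pose proof (Q_pos d (n + 1)); nia).
  pose proof (Nat.mod_upper_bound n 3 ltac:(lia)).
  destruct (n mod 3) as [|[|[|r]]] eqn:Hr; [| | |lia].
  - pose proof (concave_0mod3 d n Hn Hr (threshold_0mod3 n d Hr Hd)). split; [lia|discriminate].
  - pose proof (convex_1mod3 d n Hn Hr (threshold_1mod3 n d Hr Hd)). tauto.
  - pose proof (concave_2mod3 d n Hn Hr (threshold_2mod3 n d Hr Hd)). split; [lia|discriminate].
Qed.
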